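(* Let $1<k<n-1$ and let $H=(H_{\bm{a},\bm{b}})_{\bm{a},\bm{b}\in\mathcal{A}_k}$ be a $\binom{n}{k}\times\binom{n}{k}$ Hermitian matrix. Then for $i,j\in\{1,\dots,n\}$, $$\pi(H)_{ij}=\frac{1}{k}\sum_{\substack{\bm{l}\in\mathcal{A}_{k-1}\\ \{l_1,\dots,l_{k-1}\}\not\ni i,j}}\mathrm{sgn}(i,\bm{l})\,\mathrm{sgn}(j,\bm{l})\,H_{\mathrm{sr}(i,\bm{l}),\mathrm{sr}(j,\bm{l})},$$ where $(i,\bm{l})$ denotes $(i,l_1,\dots,l_{k-1})$ and the sum is over $\bm{l}$ containing neither $i$ nor $j$.
   Context: $\mathcal{A}_r=\{(a_1,\dots,a_r)\in\{1,\dots,n\}^{\times r}: a_1<\dots<a_r\}$; $\binom{n}{k}\times\binom{n}{k}$ matrices are indexed by $\mathcal{A}_k$ (basis $e_{a_1}\wedge\cdots\wedge e_{a_k}$ of $\wedge^k\mathbb{C}^n$). For $\bm{i}\in\{1,\dots,n\}^{\times k}$: $\mathrm{sgn}(\bm{i})=0$ if the entries of $\bm{i}$ are not all distinct, and otherwise $\mathrm{sgn}(\bm{i})=\mathrm{sgn}(\sigma)$ for the unique $\sigma\in\mathfrak{S}_k$ sorting $\bm{i}$ into increasing order; $\mathrm{sr}(\bm{i})$ is $\bm{i}$ sorted in nondecreasing order. $A$ is the $n^k\times\binom{n}{k}$ matrix with $A_{\bm{i},\bm{a}}=\frac{\mathrm{sgn}(\bm{i})}{\sqrt{k!}}\delta(\mathrm{sr}(\bm{i}),\bm{a})$.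 For an $n^k\times n^k$ matrix $M$, $\pi_1(M)_{i,j}=\sum_{l_1,\dots,l_{k-1}=1}^nM_{(i,l_1,\dots,l_{k-1}),(j,l_1,\dots,l_{k-1})}$, and $\pi(H)=\pi_1(AHA^T)$. *)

From HB Require Import structures.
From mathcomp Require Import all_boot all_order all_algebra all_fingroup.
Set Implicit Arguments. Unset Strict Implicit. Unset Printing Implicit Defensive.
Import Order.TTheory GRing.Theory Num.Theory.
Local Open Scope ring_scope.

(* Indices {1,...,n} are represented by 'I_n = {0,...,n-1}.
   Multi-indices i in {1..n}^k are k.-tuples of 'I_n. *)

Definition Ak (k n : nat) := {t : k.-tuple 'I_n | sorted ltn (map val t)}.

Definition sr (k n : nat) (t : k.-tuple 'I_n) : k.-tuple 'I_n :=
  sort_tuple (fun x y : 'I_n => (val x <= val y)%N) t.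

(* sgn(i): 0 if entries not distinct; otherwise sign of the unique
   permutation s of 'I_k such that (i_{s 0}, ..., i_{s (k-1)}) is increasing *)
Definition sgn (R : nzRingType) (k n : nat) (t : k.-tuple 'I_n) : R :=
  if uniq t then
    \sum_(s : 'S_k | sorted ltn [seq val (tnth t (s j)) | j <- enum 'I_k])
       (-1) ^+ odd_perm s
  else 0.

Definition Amx (C : numClosedFieldType) (k n : nat)
    (t : k.-tuple 'I_n) (a : Ak k n) : C :=
  sgn C t / sqrtC (k`!)%:R * (sr t == val a)%:R.

Definition cons_t (k n : nat) (i : 'I_n) (l : (k.-1).-tuple 'I_n) : k.-tuple 'I_n :=
  insubd (nseq_tuple k i) (i :: val l).

Definition pi1 (C : numClosedFieldType) (k n : nat)
    (M : k.-tuple 'I_n -> k.-tuple 'I_n -> C) (i j : 'I_n) : C :=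
  \sum_(l : (k.-1).-tuple 'I_n) M (@cons_t k n i l) (@cons_t k n j l).

Definition AHAT (C : numClosedFieldType) (k n : nat) (H : Ak k n -> Ak k n -> C)
    (s t : k.-tuple 'I_n) : C :=
  \sum_(a : Ak k n) \sum_(b : Ak k n) Amx C s a * H a b * Amx C t b.

Definition piH (C : numClosedFieldType) (k n : nat) (H : Ak k n -> Ak k n -> C)
  (i j : 'I_n) : C := pi1 (AHAT H) i j.

Definition is_hermitian (C : numClosedFieldType) (k n : nat) (H : Ak k n -> Ak k n -> C) :=
  forall a b, H b a = (H a b)^*.

(* H_{sr(s), sr(t)}: the entry of H at sr(s), sr(t) (which lie in A_k whenever
   s and t have distinct entries; 0 otherwise, which never happens in the sum) *)
Definition Hsr (C : numClosedFieldType) (k n : nat) (H : Ak k n -> Ak k n -> C)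
    (s t : k.-tuple 'I_n) : C :=
  match @insub _ (fun u : k.-tuple 'I_n => sorted ltn (map val u)) (Ak k n) (sr s),
        @insub _ (fun u : k.-tuple 'I_n => sorted ltn (map val u)) (Ak k n) (sr t) with
  | Some a, Some b => H a b
  | _, _ => 0
  end.

From mathcomp Require Import all_boot all_order all_algebra all_fingroup.
From mathcomp Require Import ring.
Import Order.TTheory GRing.Theory Num.Theory.
Set Implicit Arguments. Unset Strict Implicit. Unset Printing Implicit Defensive.
Local Open Scope ring_scope.

(* Row s of A has at most one nonzero entry, sgn(s)/sqrt(k!) in column sr(s),
   so (A H A^T)_{s,t} = sgn(s) sgn(t) H_{sr(s),sr(t)} / k!.  Hence pi(H)_{ij}
   is 1/k! times the sum over all (k-1)-tuples l of
   sgn(i,l) sgn(j,l) H_{sr(i,l),sr(j,l)}.  This summand is invariant under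
   permuting l (the two signs change together) and vanishes unless l has
   distinct entries avoiding i and j, so the sum is (k-1)! times the sum over
   increasing l; and (k-1)!/k! = 1/k. *)

Definition permute_tuple (T : Type) k (t : k.-tuple T) (p : 'S_k) : k.-tuple T :=
  [tuple tnth t (p x) | x < k].

Lemma perm_eq_permute_tuple (T : eqType) k (t : k.-tuple T) p :
  perm_eq (permute_tuple t p) t.
Proof. by apply/tuple_permP; exists p. Qed.

Lemma card_perm_eq_tuple (T : finType) k (t : k.-tuple T) :
  uniq t -> #|[pred s : k.-tuple T | perm_eq s t]| = k`!.
Proof.
move=> ut; have inj_permute : injective (permute_tuple t).
  move=> p q epq; apply/permP => x.
  have := congr1 (fun s => tnth s x) epq; rewrite !tnth_mktuple.
  exact/(tuple_uniqP _ ut).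
rewrite -card_Sn -(card_image inj_permute); apply: eq_card => s.
by rewrite inE; apply/tuple_permP/imageP => [[p /val_inj ->]|[p _ ->]];
  exists p.
Qed.

Section SortTuples.

Variables k n : nat.
Implicit Types s t u : k.-tuple 'I_n.

Let le_val := fun x y : 'I_n => (val x <= val y)%N.

Let le_val_total : total le_val. Proof. by move=> x y; exact: leq_total. Qed.
Let le_val_trans : transitive le_val. Proof. by move=> y x z; exact: leq_trans. Qed.
Let le_val_anti : antisymmetric le_val.
Proof. by move=> x y le_xy; apply/val_inj/eqP; rewrite eqn_leq. Qed.

Lemma perm_eq_sr t : perm_eq (sr t) t.
Proof. by rewrite /= perm_sort. Qed.

Lemma eq_sr s t : perm_eq s t -> sr s = sr t.
Proof.
by move=> pst; apply/val_inj/(perm_sortP le_val_total le_val_trans le_val_anti).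
Qed.

Lemma sorted_ltn_sr t : sorted ltn (map val (sr t)) = uniq t.
Proof.
rewrite ltn_sorted_uniq_leq (map_inj_uniq val_inj) sort_uniq sorted_map.
by rewrite (sort_sorted le_val_total) andbT.
Qed.

Lemma sorted_ltn_uniq u : sorted ltn (map val u) -> uniq u.
Proof. by rewrite ltn_sorted_uniq_leq (map_inj_uniq val_inj) => /andP[]. Qed.

Lemma sr_id u : sorted ltn (map val u) -> sr u = u.
Proof.
rewrite ltn_sorted_uniq_leq sorted_map => /andP[_ sorted_u].
exact/val_inj/sorted_sort.
Qed.

Lemma sr_eq_perm u t : sorted ltn (map val u) -> (sr t == u) = perm_eq t u.
Proof.
move=> sorted_u; apply/eqP/idP => [<-|/eq_sr ->]; last exact: sr_id.
by rewrite perm_sym perm_eq_sr.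
Qed.

End SortTuples.

Lemma sum_perm_invariant_tuples (V : nmodType) m n (f : m.-tuple 'I_n -> V) :
    (forall s t : m.-tuple 'I_n, perm_eq s t -> f s = f t) ->
    (forall t : m.-tuple 'I_n, ~~ uniq t -> f t = 0) ->
  \sum_t f t = (\sum_(a : Ak m n) f (val a)) *+ m`!.
Proof.
move=> f_perm f_uniq.
pose increasing := fun u : m.-tuple 'I_n => sorted ltn (map val u).
rewrite (bigID (fun t : m.-tuple 'I_n => uniq t)) /=.
rewrite [X in _ + X]big1 ?addr0 => [|t /f_uniq //].
rewrite (eq_bigr (f \o @sr m n)); last first.
  by move=> t _; apply: f_perm; rewrite perm_sym perm_eq_sr.
rewrite (partition_big (@sr m n) increasing); last first.
  by move=> t; rewrite /increasing sorted_ltn_sr.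
rewrite -sumrMnl (reindex_omap (val : Ak m n -> _) insub) /=; last first.
  by move=> u inc_u; rewrite insubT.
apply: eq_big => [a|a _]; first by rewrite valK eqxx andbT; exact: valP.
have inc_a : increasing (val a) := valP a.
rewrite (eq_bigr (fun=> f (val a))) ?sumr_const; last by move=> t /andP[_ /eqP ->].
rewrite -(card_perm_eq_tuple (sorted_ltn_uniq inc_a)); congr (_ *+ _).
apply: eq_card => t; rewrite unfold_in /= -[sval a]/(val a) (sr_eq_perm _ inc_a).
by apply/andb_idl => /perm_uniq ->; exact: sorted_ltn_uniq.
Qed.

Lemma sgn_permute_tuple (R : nzRingType) k n (t : k.-tuple 'I_n) (p : 'S_k) :
  sgn R (permute_tuple t p) = (-1) ^+ p * sgn R t.
Proof.
rewrite /sgn (perm_uniq (perm_eq_permute_tuple t p)).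
case: (uniq t); last by rewrite mulr0.
rewrite mulr_sumr (reindex_inj (@mulIg _ p^-1%g)).
apply: eq_big => [s|s _].
  by congr sorted; apply: eq_map => x; rewrite tnth_mktuple permM permKV.
by rewrite odd_permM odd_permV addbC signr_addb.
Qed.

Lemma sgn_not_uniq (R : nzRingType) k n (t : k.-tuple 'I_n) :
  ~~ uniq t -> sgn R t = 0.
Proof. by rewrite /sgn => /negbTE ->. Qed.

Lemma sum_sr_indicator (R : pzSemiRingType) k n (s : k.-tuple 'I_n)
    (f : Ak k n -> R) :
  \sum_a (sr s == val a)%:R * f a =
  if insub (sr s) is Some a then f a else 0.
Proof.
case: insubP => [a _ sr_s | not_inc].
  rewrite (bigD1 a) //= -sr_s eqxx mul1r big1 ?addr0 // => b neq_ba.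
  by rewrite val_eqE eq_sym (negbTE neq_ba) mul0r.
apply: big1 => a _; case: eqP => [sr_s|]; last by rewrite mul0r.
by move: not_inc; rewrite sr_s (valP a).
Qed.

Lemma AHAT_sgnE (C : numClosedFieldType) k n (H : Ak k n -> Ak k n -> C) s t :
  AHAT H s t = sgn C s * sgn C t / (k`!)%:R * Hsr H s t.
Proof.
rewrite /AHAT /Amx; set q := sqrtC _.
transitivity (sgn C s / q * (sgn C t / q) *
   \sum_a (sr s == val a)%:R * \sum_b (sr t == val b)%:R * H a b).
  rewrite mulr_sumr; apply: eq_bigr => a _; rewrite !mulr_sumr.
  by apply: eq_bigr => b _; ring.
under eq_bigr => a _ do rewrite sum_sr_indicator.
by rewrite sum_sr_indicator mulrACA -invfM -expr2 sqrtCK.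
Qed.

Lemma cons_tE m n (i : 'I_n) (l : m.-tuple 'I_n) :
  @cons_t m.+1 n i l = [tuple of i :: l].
Proof. by apply: val_inj; rewrite /cons_t insubdK // unfold_in /= size_tuple. Qed.

Lemma cons_permute_tuple T m (i : T) (l : m.-tuple T) (q : 'S_m) :
  [tuple of i :: permute_tuple l q] =
  permute_tuple [tuple of i :: l] (lift_perm ord0 ord0 q).
Proof.
apply: eq_from_tnth => x; rewrite tnth_mktuple.
case: (unliftP ord0 x) => [y ->|->]; last by rewrite lift_perm_id !tnth0.
by rewrite lift_perm_lift !tnthS tnth_mktuple.
Qed.

Section PiSummand.

Variables (C : numClosedFieldType) (m n : nat) (H : Ak m.+1 n -> Ak m.+1 n -> C).
Variables i j : 'I_n.

Definition pi_summand (l : m.-tuple 'I_n) : C :=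
  sgn C (@cons_t m.+1 n i l) * sgn C (@cons_t m.+1 n j l)
  * Hsr H (@cons_t m.+1 n i l) (@cons_t m.+1 n j l).

Lemma pi_summand_perm_eq (l l' : m.-tuple 'I_n) :
  perm_eq l l' -> pi_summand l = pi_summand l'.
Proof.
move/tuple_permP => [q /val_inj ->]; rewrite /pi_summand !cons_tE.
rewrite !cons_permute_tuple !sgn_permute_tuple /Hsr.
rewrite !(eq_sr (perm_eq_permute_tuple _ _)).
by rewrite mulrACA -signr_addb addbb expr0 mul1r.
Qed.

Lemma pi_summand_eq0 (l : m.-tuple 'I_n) :
  ~~ [&& uniq l, i \notin l & j \notin l] -> pi_summand l = 0.
Proof.
move=> bad; rewrite /pi_summand !cons_tE.
have : ~~ uniq [tuple of i :: l] || ~~ uniq [tuple of j :: l].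
  by rewrite -negb_and; apply: contra bad => /= /andP[/andP[-> ->] /andP[-> _]].
by case/orP => /sgn_not_uniq ->; rewrite !(mulr0, mul0r).
Qed.

End PiSummand.

Theorem lemma3p3 (C : numClosedFieldType) (k n : nat)
  (hk : (1 < k)%N) (hkn : (k < n - 1)%N)
  (H : Ak k n -> Ak k n -> C) (hH : is_hermitian H) (i j : 'I_n) :
  piH H i j =
  k%:R^-1 * \sum_(l : Ak k.-1 n | (i \notin val l) && (j \notin val l))
     sgn C (@cons_t k n i (val l)) * sgn C (@cons_t k n j (val l))
     * Hsr H (@cons_t k n i (val l)) (@cons_t k n j (val l)).
Proof.
case: k hk hkn H hH => [//|m] _ _ H _.
change (piH H i j = m.+1%:R^-1 *
  \sum_(l : Ak m n | (i \notin val l) && (j \notin val l)) pi_summand H i j (val l)).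
have -> : piH H i j = (\sum_l pi_summand H i j l) / (m.+1)`!%:R.
  rewrite /piH /pi1 mulr_suml; apply: eq_bigr => l _.
  by rewrite AHAT_sgnE /pi_summand mulrAC.
rewrite (sum_perm_invariant_tuples (pi_summand_perm_eq H i j)); last first.
  by move=> l not_uniq; apply: pi_summand_eq0; rewrite negb_and not_uniq.
rewrite [in LHS](bigID (fun l : Ak m n => (i \notin val l) && (j \notin val l))) /=.
rewrite [X in _ + X]big1 ?addr0 => [|l meets_ij]; last first.
  by apply: pi_summand_eq0; rewrite (negbTE meets_ij) andbF.
rewrite factS natrM -mulr_natr; field.
by rewrite -mulrS !pnatr_eq0 -!lt0n fact_gt0.
Qed.
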